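(* Let $\Sigma$ be a finite alphabet. A regular language $L \subseteq \Sigma^*$ belongs to $\mathsf{F}(\mathcal{O}(1))$ if and only if $L$ is a finite Boolean combination of suffix testable languages and regular length languages.
   Context: A streaming algorithm over $\Sigma$ is a deterministic (possibly infinite-state) automaton with an injective encoding $\mathrm{enc}$ of its states into bit strings. Fix a symbol $a\in\Sigma$; for $w=a_1\cdots a_m$ and $n\ge0$, $\mathrm{last}_n(w)=a_{m-n+1}\cdots a_m$ if $n\le m$ and $a^{n-m}a_1\cdots a_m$ otherwise. A fixed-size sliding window algorithm for $L$ is a sequence $(\mathcal{A}_n)_{n\ge0}$ where $\mathcal{A}_n$ is a streaming algorithm accepting $\{w\in\Sigma^* : \mathrm{last}_n(w)\in L\}$; its space complexity at $n$ is the maximal encoding length of a state of $\mathcal{A}_n$. $\mathsf{F}(\mathcal{O}(1))$ is the class of languages having a fixed-size sliding window algorithm whose space complexity is bounded by a constant. $L$ is $k$-suffix testable if for all $x,y\in\Sigma^*$ and $z\in\Sigma^k$: $xz\in L\iff yz\in L$; suffix testable if $k$-suffix testable for some $k\ge0$. $L$ is a length language if for each $n$ either $\Sigma^n\subseteq L$ or $L\cap\Sigma^n=\emptyset$. *)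

From mathcomp Require Import all_boot.
Set Implicit Arguments. Unset Strict Implicit. Unset Printing Implicit Defensive.

Definition lang (Sigma : Type) := seq Sigma -> Prop.

Definition regular (Sigma : finType) (L : lang Sigma) : Prop :=
  exists (Q : finType) (q0 : Q) (delta : Q -> Sigma -> Q) (F : pred Q),
    forall w, L w <-> F (foldl delta q0 w).

(* Streaming algorithm: deterministic, possibly infinite-state automaton
   with an injective encoding of its states into bit strings. *)
Record streaming_alg (Sigma : Type) := StreamingAlg {
  sa_state : Type;
  sa_init : sa_state;
  sa_delta : sa_state -> Sigma -> sa_state;
  sa_final : sa_state -> bool;
  sa_enc : sa_state -> seq bool;
  sa_enc_inj : injective sa_enc }.
Arguments sa_init {Sigma} s.
Arguments sa_delta {Sigma} s _ _.
Arguments sa_final {Sigma} s _.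
Arguments sa_enc {Sigma} s _.

Definition sa_accepts (Sigma : Type) (A : streaming_alg Sigma) (w : seq Sigma) : Prop :=
  sa_final A (foldl (sa_delta A) (sa_init A) w).

Definition lastn (Sigma : Type) (a : Sigma) (n : nat) (w : seq Sigma) : seq Sigma :=
  if n <= size w then drop (size w - n) w else nseq (n - size w) a ++ w.

Definition sliding_window_alg (Sigma : Type) (a : Sigma) (L : lang Sigma)
    (A : nat -> streaming_alg Sigma) : Prop :=
  forall n w, sa_accepts (A n) w <-> L (lastn a n w).

Definition space_bounded_by (Sigma : Type) (A : nat -> streaming_alg Sigma) (c : nat) : Prop :=
  forall n (q : sa_state (A n)), size (sa_enc (A n) q) <= c.

Definition F_O1 (Sigma : Type) (a : Sigma) (L : lang Sigma) : Prop :=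
  exists A : nat -> streaming_alg Sigma,
    sliding_window_alg a L A /\ exists c, space_bounded_by A c.

Definition k_suffix_testable (Sigma : Type) (k : nat) (L : lang Sigma) : Prop :=
  forall x y z : seq Sigma, size z = k -> (L (x ++ z) <-> L (y ++ z)).

Definition suffix_testable (Sigma : Type) (L : lang Sigma) : Prop :=
  exists k, k_suffix_testable k L.

Definition length_lang (Sigma : Type) (L : lang Sigma) : Prop :=
  forall n, (forall w : seq Sigma, size w = n -> L w) \/
            (forall w : seq Sigma, size w = n -> ~ L w).

Inductive bool_comb (Sigma : Type) (P : lang Sigma -> Prop) : lang Sigma -> Prop :=
  | bc_atom L : P L -> bool_comb P L
  | bc_empty : bool_comb P (fun _ => False)
  | bc_full : bool_comb P (fun _ => True)
  | bc_compl L : bool_comb P L -> bool_comb P (fun w => ~ L w)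
  | bc_union L1 L2 : bool_comb P L1 -> bool_comb P L2 -> bool_comb P (fun w => L1 w \/ L2 w)
  | bc_inter L1 L2 : bool_comb P L1 -> bool_comb P L2 -> bool_comb P (fun w => L1 w /\ L2 w)
  | bc_ext L1 L2 : (forall w, L1 w <-> L2 w) -> bool_comb P L1 -> bool_comb P L2.

From mathcomp Require Import all_boot zify.
From Stdlib Require Import Classical ClassicalEpsilon.
Set Implicit Arguments. Unset Strict Implicit. Unset Printing Implicit Defensive.

(* If L(last_n w) depends only on last_k w, for a k independent of n, then storing
   the last k letters gives a constant-space algorithm; suffix testable and length
   languages have this property, and it is preserved by Boolean combinations.
   Conversely, a constant-space algorithm A_n has at most K states, so from any state
   iterating a word y K times or K + K! times leads to the same state. Given equal-length
   x, x' and z of length |Q|^2, pumping a loop of the DFA of L that is common to the runs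
   on x and x' puts a long power of y in front of which x and x' become indistinguishable,
   so L(xz) <-> L(x'z). Then L(w) depends only on |w| and the last |Q|^2 letters of w,
   which makes L a finite union of intersections of a suffix testable language with a
   regular length language. *)

Section Lastn.
Variables (S : Type) (a : S).
Implicit Types (w s : seq S) (n k : nat).

Lemma size_lastn n w : size (lastn a n w) = n.
Proof. by rewrite /lastn; case: ifP => h; rewrite ?size_drop ?size_cat ?size_nseq; lia. Qed.

Lemma lastn_size w : lastn a (size w) w = w.
Proof. by rewrite /lastn leqnn subnn drop0. Qed.

Lemma lastn_lastn n k w : n <= k -> lastn a n (lastn a k w) = lastn a n w.
Proof.
move=> le_nk; rewrite {1}/lastn size_lastn le_nk /lastn.
case: (leqP k (size w)) => hk.
  by rewrite drop_drop ifT; [congr drop; lia | lia].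
rewrite drop_cat size_nseq; case: (leqP n (size w)) => hn.
  by rewrite ifN; [congr drop; lia | lia].
by rewrite ifT ?drop_nseq; [congr (nseq _ _ ++ _); lia | lia].
Qed.

Lemma lastn_cat_small n w s : size s <= n ->
  lastn a n (w ++ s) = lastn a (n - size s) w ++ s.
Proof.
move=> hs; rewrite /lastn size_cat.
case: (leqP n (size w + size s)) => h.
  rewrite (_ : n - size s <= size w) /=; last lia.
  rewrite drop_cat; case: ifP => hn; first by congr (drop _ _ ++ _); lia.
  have -> : size w + size s - n - size w = 0 by lia.
  by rewrite drop0 drop_oversize //; lia.
rewrite (_ : n - size s <= size w = false) /= -?catA; last lia.
by congr (nseq _ _ ++ _); lia.
Qed.

Lemma lastn_cat_large n w s : n <= size s -> lastn a n (w ++ s) = lastn a n s.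
Proof.
move=> hs; rewrite /lastn size_cat hs ifT; last lia.
by rewrite drop_cat ifN; [congr drop; lia | lia].
Qed.

Lemma lastn_cat_suffix w s : lastn a (size s) (w ++ s) = s.
Proof. by rewrite lastn_cat_large // lastn_size. Qed.

Lemma lastn_lastn_cat k w s : lastn a k (lastn a k w ++ s) = lastn a k (w ++ s).
Proof.
case: (leqP (size s) k) => hs; last by rewrite !lastn_cat_large // ltnW.
by rewrite !lastn_cat_small // lastn_lastn // leq_subr.
Qed.

Lemma lastn_eqW k K w1 w2 : k <= K ->
  lastn a K w1 = lastn a K w2 -> lastn a k w1 = lastn a k w2.
Proof. by move=> le_kK e; rewrite -(lastn_lastn w1 le_kK) e lastn_lastn. Qed.

Lemma lastn_split n k w : k <= n ->
  lastn a n w = take (n - k) (lastn a n w) ++ lastn a k w.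
Proof.
move=> le_kn; rewrite -(lastn_lastn w le_kn); set v := lastn a n w.
by rewrite /lastn size_lastn le_kn cat_take_drop.
Qed.
End Lastn.

Section WindowLocal.
Variables (S : Type) (a : S).
Implicit Types (L : lang S) (k : nat).

Definition window_local k L :=
  forall n w1 w2, lastn a k w1 = lastn a k w2 ->
    (L (lastn a n w1) <-> L (lastn a n w2)).

Lemma window_localW k K L : k <= K -> window_local k L -> window_local K L.
Proof. by move=> le_kK hL n w1 w2 /(lastn_eqW le_kK); apply: hL. Qed.

Lemma suffix_testable_window_local k L : k_suffix_testable k L -> window_local k L.
Proof.
move=> hL n w1 w2 e; case: (leqP n k) => [le_nk | /ltnW le_kn].
  by rewrite -(lastn_lastn a w1 le_nk) e lastn_lastn.
rewrite (lastn_split a w1 le_kn) (lastn_split a w2 le_kn) e.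
by apply: hL; rewrite size_lastn.
Qed.

Lemma length_lang_window_local L : length_lang L -> window_local 0 L.
Proof.
move=> hL n w1 w2 _.
case: (hL n) => h; first by split=> _; apply: h; rewrite size_lastn.
by split=> H; case: (h _ (size_lastn a n _) H).
Qed.

Lemma bool_comb_window_local (P : lang S -> Prop) L :
  (forall K, P K -> exists k, window_local k K) ->
  bool_comb P L -> exists k, window_local k L.
Proof.
have join k1 k2 L1 L2 : window_local k1 L1 -> window_local k2 L2 ->
    window_local (maxn k1 k2) L1 /\ window_local (maxn k1 k2) L2.
  move=> h1 h2; split; first exact: window_localW (leq_maxl _ _) h1.
  exact: window_localW (leq_maxr _ _) h2.
move=> hP; elim=> {L}.
- by move=> L /hP.
- by exists 0.
- by exists 0.
- by move=> L _ [k hk]; exists k => n w1 w2 e; move: (hk n _ _ e); tauto.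
- move=> L1 L2 _ [k1 h1] _ [k2 h2]; have [{}h1 {}h2] := join _ _ _ _ h1 h2.
  by exists (maxn k1 k2) => n w1 w2 e; move: (h1 n _ _ e) (h2 n _ _ e); tauto.
- move=> L1 L2 _ [k1 h1] _ [k2 h2]; have [{}h1 {}h2] := join _ _ _ _ h1 h2.
  by exists (maxn k1 k2) => n w1 w2 e; move: (h1 n _ _ e) (h2 n _ _ e); tauto.
- by move=> L1 L2 e _ [k hk]; exists k => n w1 w2; rewrite -!e; apply: hk.
Qed.
End WindowLocal.

Section WindowAlg.
Variables (Sigma : finType) (a : Sigma) (L : lang Sigma) (k n : nat).

Lemma lastn_tupleP w : size (lastn a k w) == k.
Proof. by rewrite size_lastn. Qed.

Definition lastn_tuple w : k.-tuple Sigma := Tuple (lastn_tupleP w).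

Definition window_delta (t : k.-tuple Sigma) (x : Sigma) := lastn_tuple (rcons t x).

Definition window_final (t : k.-tuple Sigma) : bool :=
  if excluded_middle_informative (L (lastn a n t)) then true else false.

Definition window_enc (t : k.-tuple Sigma) : bitseq := nseq (enum_rank t) true.

Lemma window_enc_inj : injective window_enc.
Proof.
move=> t1 t2 /(congr1 size); rewrite !size_nseq => /val_inj.
exact: enum_rank_inj.
Qed.

Definition window_alg : streaming_alg Sigma :=
  StreamingAlg (lastn_tuple [::]) window_delta window_final window_enc_inj.

Lemma window_alg_state w : foldl window_delta (lastn_tuple [::]) w = lastn_tuple w.
Proof.
elim/last_ind: w => [//|w x IH]; rewrite foldl_rcons IH; apply: val_inj.
by rewrite /= -!cats1 lastn_lastn_cat.
Qed.

Lemma size_window_enc t : size (window_enc t) <= #|{: k.-tuple Sigma}|.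
Proof. by rewrite size_nseq ltnW. Qed.
End WindowAlg.

Lemma window_local_F_O1 (Sigma : finType) (a : Sigma) (L : lang Sigma) k :
  window_local a k L -> F_O1 a L.
Proof.
move=> hL; exists (window_alg a L k); split; last first.
  by exists #|{: k.-tuple Sigma}| => n t; apply: size_window_enc.
move=> n w; rewrite /sa_accepts /= window_alg_state /window_final /=.
have e : L (lastn a n (lastn a k w)) <-> L (lastn a n w) by apply: hL; rewrite lastn_lastn.
by case: excluded_middle_informative => h; split=> // H; [exact/e | case: h; apply/e].
Qed.

Fixpoint bitseqs (c : nat) : seq bitseq :=
  if c is c'.+1 then [::] :: map (cons true) (bitseqs c') ++ map (cons false) (bitseqs c')
  else [:: [::]].

Lemma mem_bitseqs c s : size s <= c -> s \in bitseqs c.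
Proof.
elim: c s => [|c IH] [|b s] //= hs.
by rewrite in_cons mem_cat; case: b; rewrite map_f ?orbT ?IH.
Qed.

Lemma pigeonhole_seq (T : eqType) (univ : seq T) (h : nat -> T) :
  (forall i, h i \in univ) -> exists i j, i < j <= size univ /\ h i = h j.
Proof.
move=> h_univ; set hs := [seq h i | i <- iota 0 (size univ).+1].
have /(uniqPn (h 0)) [i [j [lt_ij]]] : ~~ uniq hs.
  apply/negP => /uniq_leq_size /(_ _) sub.
  have /sub : {subset hs <= univ} by move=> _ /mapP [i _ ->].
  by rewrite size_map size_iota ltnn.
rewrite size_map size_iota => lt_j.
rewrite !(nth_map 0) ?size_iota ?(ltn_trans lt_ij) // !nth_iota ?(ltn_trans lt_ij) //.
by move=> e; exists i, j; rewrite lt_ij.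
Qed.

Lemma iter_periodic (S : Type) (g : S -> S) x i p :
  iter (i + p) g x = iter i g x -> forall m r, iter (i + m + r * p) g x = iter (i + m) g x.
Proof.
move=> e m; elim=> [|r IH]; first by rewrite addn0.
rewrite (_ : i + m + r.+1 * p = m + r * p + (i + p)); last by rewrite mulSn; lia.
by rewrite iterD e -iterD addnC addnA IH.
Qed.

Lemma iter_add_fact (S : Type) (T : eqType) (enc : S -> T) (univ : seq T) (g : S -> S) x :
  injective enc -> (forall s, enc s \in univ) ->
  iter (size univ + (size univ)`!) g x = iter (size univ) g x.
Proof.
move=> enc_inj enc_univ; set K := size univ.
have [i [j [/andP [lt_ij le_jK] /enc_inj e]]] :=
  pigeonhole_seq (fun t => enc_univ (iter t g x)).
have dvd_K : (j - i) %| K`! by apply: dvdn_fact; lia.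
have -> : K + K`! = i + (K - i) + K`! %/ (j - i) * (j - i) by rewrite divnK //; lia.
by rewrite iter_periodic subnKC // ?e ltnW // (leq_trans lt_ij).
Qed.

Definition seqpow (T : Type) (s : seq T) n := flatten (nseq n s).

Section SeqPow.
Variables (T : Type) (s : seq T).

Lemma seqpowS n : seqpow s n.+1 = s ++ seqpow s n.
Proof. by []. Qed.

Lemma size_seqpow n : size (seqpow s n) = n * size s.
Proof. by elim: n => //= n IH; rewrite seqpowS size_cat IH mulSn. Qed.

Lemma seqpowD m n : seqpow s (m + n) = seqpow s m ++ seqpow s n.
Proof. by elim: m => //= m IH; rewrite !seqpowS IH catA. Qed.

Lemma seqpowM m n : seqpow (seqpow s m) n = seqpow s (n * m).
Proof. by elim: n => // n IH; rewrite mulSn seqpowD -IH. Qed.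

Lemma foldl_seqpow (R : Type) (f : R -> T -> R) r n :
  foldl f r (seqpow s n) = iter n (fun r => foldl f r s) r.
Proof. by elim: n r => //= n IH r; rewrite seqpowS foldl_cat IH -iterSr. Qed.

Lemma foldl_seqpow_fix (R : Type) (f : R -> T -> R) r n :
  foldl f r s = r -> foldl f r (seqpow s n) = r.
Proof. by move=> e; rewrite foldl_seqpow iter_fix. Qed.
End SeqPow.

Section ConstantSpace.
Variables (Sigma : Type) (a : Sigma) (L : lang Sigma).
Variables (A : nat -> streaming_alg Sigma) (c : nat).
Hypotheses (hA : sliding_window_alg a L A) (hc : space_bounded_by A c).
Let K := size (bitseqs c).

Lemma trade_prefix_for_period v u y z : size v = K`! * size y ->
  L (v ++ u ++ seqpow y K ++ z) <-> L (u ++ seqpow y (K + K`!) ++ z).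
Proof.
(* Both sides are decided by A_n on words of the same length n that share the prefix
   v ++ u, after which A_n iterates y from one state either K or K + K! times. *)
move=> hv; set n := size (v ++ u ++ seqpow y K ++ z).
have -> : L (v ++ u ++ seqpow y K ++ z) <-> sa_accepts (A n) (v ++ u ++ seqpow y K ++ z).
  by rewrite hA lastn_size.
have -> : L (u ++ seqpow y (K + K`!) ++ z) <->
          sa_accepts (A n) (v ++ u ++ seqpow y (K + K`!) ++ z).
  rewrite hA (_ : n = size (u ++ seqpow y (K + K`!) ++ z)) ?lastn_cat_suffix //.
  by rewrite /n !size_cat !size_seqpow hv mulnDl; lia.
rewrite /sa_accepts !catA !foldl_cat !foldl_seqpow.
by rewrite (iter_add_fact _ _ (@sa_enc_inj _ (A n)) (fun q => mem_bitseqs (hc q))).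
Qed.

Lemma long_prefix_oblivious x x' s y z : size x = size x' ->
  size x <= K`! * size y <= size x + size s ->
  L (x ++ s ++ seqpow y K ++ z) <-> L (x' ++ s ++ seqpow y K ++ z).
Proof.
move=> hx /andP [le_x le_s]; set t := K`! * size y - size x.
have size_take_t : size (take t s) = t by rewrite size_takel //; lia.
rewrite -(cat_take_drop t s) -!catA (catA x) (catA x').
rewrite trade_prefix_for_period; last by rewrite size_cat size_take_t; lia.
by rewrite trade_prefix_for_period // size_cat size_take_t; lia.
Qed.
End ConstantSpace.

Lemma foldl_pair (S Q1 Q2 : Type) (f1 : Q1 -> S -> Q1) (f2 : Q2 -> S -> Q2) r1 r2 w :
  foldl (fun r x => (f1 r.1 x, f2 r.2 x)) (r1, r2) w = (foldl f1 r1 w, foldl f2 r2 w).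
Proof. by elim: w r1 r2 => //= x w IH r1 r2; rewrite IH. Qed.

Lemma foldl_loop (S : Type) (Q : finType) (f : Q -> S -> Q) r z : #|Q| <= size z ->
  exists z1 z2 z3,
    [/\ z = z1 ++ z2 ++ z3, 0 < size z2 & foldl f r (z1 ++ z2) = foldl f r z1].
Proof.
move=> hz; have [i [j [/andP [lt_ij le_j] e]]] :=
  pigeonhole_seq (fun t => mem_enum Q (foldl f r (take t z))).
have take_ij : take i z ++ drop i (take j z) = take j z.
  by rewrite -{1}(take_takel z (ltnW lt_ij)) cat_take_drop.
exists (take i z), (drop i (take j z)), (drop j z); split.
- by rewrite catA take_ij cat_take_drop.
- by rewrite size_drop size_takel ?subn_gt0 // (leq_trans le_j) // -cardE.
- by rewrite take_ij e.
Qed.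

Definition k_suffix_testable_eqsize (S : Type) (k : nat) (L : lang S) :=
  forall x y z : seq S, size x = size y -> size z = k -> (L (x ++ z) <-> L (y ++ z)).

Section ConstantSpaceRegular.
Variables (Sigma : Type) (a : Sigma) (L : lang Sigma).
Variables (Q : finType) (q0 : Q) (delta : Q -> Sigma -> Q) (F : pred Q).
Hypothesis hD : forall w, L w <-> F (foldl delta q0 w).
Variables (A : nat -> streaming_alg Sigma) (c : nat).
Hypotheses (hA : sliding_window_alg a L A) (hc : space_bounded_by A c).

Lemma dfa_pump u y z m : foldl delta (foldl delta q0 u) y = foldl delta q0 u ->
  L (u ++ y ++ z) <-> L (u ++ seqpow y m ++ z).
Proof. by move=> e; rewrite !hD !foldl_cat e foldl_seqpow_fix. Qed.

Lemma constant_space_suffix_testable_eqsize : k_suffix_testable_eqsize #|{: Q * Q}| L.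
Proof.
move=> x y z hxy hz.
have [z1 [z2 [z3 [-> z2_gt0]]]] :=
  foldl_loop (fun p b => (delta p.1 b, delta p.2 b)) (foldl delta q0 x, foldl delta q0 y)
    (eq_leq (esym hz)).
rewrite !foldl_pair => -[loop_x loop_y].
set K := size (bitseqs c); set h := (size x).+1.
(* Repeat the loop z2 K!h + Kh times: with y := z2^h, the prefix x is short next to K!|y|. *)
have pumped u :
    foldl delta (foldl delta q0 u) (z1 ++ z2) = foldl delta (foldl delta q0 u) z1 ->
    L (u ++ z1 ++ z2 ++ z3) <->
    L (u ++ (z1 ++ seqpow z2 (K`! * h)) ++ seqpow (seqpow z2 h) K ++ z3).
  move=> e; rewrite seqpowM -!catA (catA (seqpow z2 _)) -seqpowD !(catA u z1).
  by apply: dfa_pump; move: e; rewrite !foldl_cat.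
rewrite pumped // [in X in _ <-> X]pumped //.
apply: (long_prefix_oblivious hA hc _ hxy); rewrite -/K size_cat !size_seqpow.
apply/andP; split; last by rewrite mulnA; lia.
have := leq_pmulr h z2_gt0; have := leq_pmull (h * size z2) (fact_gt0 K); lia.
Qed.
End ConstantSpaceRegular.

Lemma regular_F_O1_suffix_testable_eqsize (Sigma : finType) (a : Sigma) (L : lang Sigma) :
  regular L -> F_O1 a L -> exists k, k_suffix_testable_eqsize k L.
Proof.
move=> [Q [q0 [delta [F hD]]]] [A [hA [c hc]]]; exists #|{: Q * Q}|.
by apply: (constant_space_suffix_testable_eqsize hD hA hc).
Qed.

Section PaddedSuffix.
Variables (Sigma Q : Type) (a : Sigma) (delta : Q -> Sigma -> Q) (k : nat).

(* After reading w the counter is min(|w|, k) and the DFA has read a^(|w| - k), the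
   padding of last_|w|(z) when k = |z|. *)
Definition pad_delta (p : 'I_k.+1 * Q) (x : Sigma) : 'I_k.+1 * Q :=
  if p.1 < k then (inord p.1.+1, p.2) else (p.1, delta p.2 a).

Lemma foldl_pad_delta q0 w : foldl pad_delta (ord0, q0) w =
  (inord (minn (size w) k), foldl delta q0 (nseq (size w - k) a)).
Proof.
elim/last_ind: w => [|w x IH].
  by rewrite min0n sub0n; congr pair; apply: val_inj; rewrite /= inordK.
rewrite foldl_rcons IH size_rcons /pad_delta /= inordK ?ltnS ?geq_minr //.
case: ifP => lt_wk /=.
  have [-> ->] : size w - k = 0 /\ (size w).+1 - k = 0 by lia.
  by congr (inord _, _); lia.
rewrite (_ : (size w).+1 - k = size w - k + 1); last lia.
by rewrite nseqD foldl_cat; congr (inord _, _); lia.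
Qed.
End PaddedSuffix.

Lemma regular_lastn_size (Sigma : finType) (a : Sigma) (L : lang Sigma) z :
  regular L -> regular (fun w : seq Sigma => L (lastn a (size w) z)).
Proof.
move=> [Q [q0 [delta [F hD]]]].
exists ('I_(size z).+1 * Q)%type, (ord0, q0), (pad_delta a delta (k := size z)),
  (fun p : 'I_(size z).+1 * Q => F (foldl delta p.2 (drop (size z - p.1) z))).
move=> w; rewrite hD foldl_pad_delta /= inordK ?ltnS ?geq_minr // -foldl_cat.
rewrite /lastn; case: leqP => h; last by rewrite subnn drop0.
by rewrite (_ : size w - size z = 0) //; lia.
Qed.

Lemma bool_comb_exists_in (S : Type) (T : eqType) (P : lang S -> Prop)
    (M : T -> lang S) (s : seq T) :
  (forall t, bool_comb P (M t)) -> bool_comb P (fun w => exists2 t, t \in s & M t w).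
Proof.
move=> hM; elim: s => [|t s IH].
  by apply: bc_ext (bc_empty P) => w; split=> // -[].
apply: bc_ext (bc_union (hM t) IH) => w; split.
  case=> [Mw | [t' st' Mw]]; first by exists t; rewrite ?mem_head.
  by exists t'; rewrite ?in_cons ?st' ?orbT.
by case=> t'; rewrite in_cons => /predU1P [-> | st'] Mw; [left | right; exists t'].
Qed.

Section Decomposition.
Variables (Sigma : finType) (a : Sigma) (L : lang Sigma) (k : nat).
Hypotheses (regL : regular L) (hL : k_suffix_testable_eqsize k L).

Lemma in_lang_lastn_lastn w : L w <-> L (lastn a (size w) (lastn a k w)).
Proof.
case: (leqP (size w) k) => [le_wk | lt_kw]; first by rewrite lastn_lastn // lastn_size.
have ew : w = take (size w - k) w ++ lastn a k w.
  by rewrite /lastn ifT ?cat_take_drop // ltnW.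
rewrite {1}ew {2}/lastn size_lastn leqNgt lt_kw /=.
by apply: hL; rewrite ?size_lastn // size_nseq size_takel // leq_subr.
Qed.

Lemma bool_comb_suffix_testable_length :
  bool_comb (fun K => suffix_testable K \/ (regular K /\ length_lang K)) L.
Proof.
pose M (t : k.-tuple Sigma) w := lastn a k w = t /\ L (lastn a (size w) t).
apply: bc_ext (bool_comb_exists_in (enum {: k.-tuple Sigma}) (M := M) _) => [w | t].
  split=> [[t _ [<-]] | Lw]; first by rewrite -in_lang_lastn_lastn.
  by exists (lastn_tuple a k w); rewrite ?mem_enum // /M -in_lang_lastn_lastn.
apply: bc_inter; apply: bc_atom.
  have lastn_cat_k x z : size z = k -> lastn a k (x ++ z) = z.
    by move=> <-; rewrite lastn_cat_suffix.
  by left; exists k => x y z hz; rewrite !lastn_cat_k.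
right; split; first exact: regular_lastn_size.
by move=> n; case: (classic (L (lastn a n t))) => h; [left | right] => w ->.
Qed.
End Decomposition.

Theorem theorem6p1 (Sigma : finType) (a : Sigma) (L : lang Sigma) :
  regular L ->
  (F_O1 a L <->
   bool_comb (fun K => suffix_testable K \/ (regular K /\ length_lang K)) L).
Proof.
move=> regL; split.
  move=> /(regular_F_O1_suffix_testable_eqsize regL) [k hL].
  by apply: (bool_comb_suffix_testable_length a regL hL).
have atom_window_local K : suffix_testable K \/ (regular K /\ length_lang K) ->
    exists k, window_local a k K.
  case=> [[k hK] | [_ hK]]; first by exists k; apply: suffix_testable_window_local.
  by exists 0; apply: length_lang_window_local.
by move=> /(bool_comb_window_local atom_window_local) [k /window_local_F_O1].
Qed.
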